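(* Let $(\mathbf{X},\mathbf{p})$ be a $\{1,k\}$-payment equilibrium. If agent $i\in N_H$ is pEF1 towards every other agent, then $|X_i\cap L|\le\min_{j\in N_L}|X_j|$.
   Context: Fix $k>1$. Agents $N$, chores $M$, additive costs $c_i(e)\in\{1,k\}$. An allocation $\mathbf{X}$ partitions $M$ into bundles $X_i$. A payment vector assigns $p(e)>0$, $p(X)=\sum_{e\in X}p(e)$; $\alpha_{i,e}=c_i(e)/p(e)$, $\alpha_i=\min_e\alpha_{i,e}$, $\mathsf{MPB}_i=\{e:\alpha_{i,e}=\alpha_i\}$; $(\mathbf{X},\mathbf{p})$ is a $\{1,k\}$-payment equilibrium if $X_i\subseteq\mathsf{MPB}_i$ for all $i$ and $p(e)\in\{1,k\}$ for all $e$. $L=\{e:p(e)=1\}$, $H=\{e:p(e)=k\}$, $N_L=\{i:X_i\subseteq L\}$, $N_H=\{i:|X_i\cap H|\ge1\}$. Agent $i$ is pEF1 towards $j$ if $X_i=\emptyset$ or there is $e\in X_i$ with $p(X_i\setminus\{e\})\le p(X_j)$. *)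

From HB Require Import structures.
From mathcomp Require Import all_boot all_order all_algebra.
Set Implicit Arguments. Unset Strict Implicit. Unset Printing Implicit Defensive.
Import Order.TTheory GRing.Theory Num.Theory.
Local Open Scope ring_scope.

Section FairDivision.
Variables (R : realFieldType) (A M : finType).

Definition is_allocation (X : A -> {set M}) : Prop :=
  (forall e : M, exists i : A, e \in X i) /\
  (forall i j : A, i != j -> [disjoint X i & X j]).

Definition pay (p : M -> R) (S : {set M}) : R := \sum_(e in S) p e.

Definition alpha (c : A -> M -> R) (p : M -> R) (i : A) (e : M) : R := c i e / p e.

Definition MPB (c : A -> M -> R) (p : M -> R) (i : A) : {set M} :=
  [set e | [forall e', alpha c p i e <= alpha c p i e']].

Definition payment_equilibrium (k : R) (c : A -> M -> R) (X : A -> {set M})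
    (p : M -> R) : Prop :=
  (forall i, X i \subset MPB c p i) /\ (forall e, p e = 1 \/ p e = k).

Definition Lset (p : M -> R) : {set M} := [set e | p e == 1].
Definition Hset (k : R) (p : M -> R) : {set M} := [set e | p e == k].
Definition N_L (X : A -> {set M}) (p : M -> R) : {set A} :=
  [set i | X i \subset Lset p].
Definition N_H (k : R) (X : A -> {set M}) (p : M -> R) : {set A} :=
  [set i | (1 <= #|X i :&: Hset k p|)%N].

Definition pEF1 (p : M -> R) (X : A -> {set M}) (i j : A) : Prop :=
  X i = set0 \/ exists2 e, e \in X i & pay p (X i :\ e) <= pay p (X j).

End FairDivision.

From mathcomp Require Import all_boot all_order all_algebra.
Import Order.TTheory GRing.Theory Num.Theory.
Local Open Scope ring_scope.

(* Pick a chore h of X i with payment k > 1 and an agent j in N_L; then j <> i,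
   and p(X j) = |X j|.  The chores of X i in L together with h form a set of
   |X i ∩ L| + 1 chores, each of payment at least 1, so removing any single
   chore e from X i leaves payment at least |X i ∩ L|; pEF1 towards j gives
   p(X i \ e) <= p(X j) for some e. *)

Section Payments.
Context {R : realFieldType} {M : finType} {p : M -> R}.

Lemma pay_Lset {S : {set M}} : S \subset Lset p -> pay p S = #|S|%:R.
Proof.
move=> /subsetP SL; rewrite /pay -sumr_const.
by apply: eq_bigr => e /SL; rewrite inE => /eqP.
Qed.

Lemma card_le_pay {S : {set M}} :
  {in S, forall e, 1 <= p e} -> #|S|%:R <= pay p S.
Proof. by move=> p_ge1; rewrite /pay -sumr_const; apply: ler_sum. Qed.

Lemma pay_subset {S T : {set M}} :
  (forall e, 0 <= p e) -> S \subset T -> pay p S <= pay p T.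
Proof.
move=> p_ge0 ST; rewrite /pay [X in _ <= X](big_setID S) /= (setIidPr ST).
by rewrite lerDl sumr_ge0.
Qed.

Lemma card_Lset_le_pay_setD1 {S : {set M}} {h : M} (e : M) :
  (forall x, 0 < p x) -> h \in S -> 1 < p h ->
  #|S :&: Lset p|%:R <= pay p (S :\ e).
Proof.
move=> p_gt0 hS ph_gt1.
have hNL : h \notin Lset p by rewrite inE gt_eqF.
pose T := h |: (S :&: Lset p).
have p_ge1 : {in T, forall x, 1 <= p x}.
  by move=> x; rewrite !inE => /orP[/eqP -> | /andP[_ /eqP ->]] //; apply: ltW.
have card_T : #|T| = #|S :&: Lset p|.+1.
  by rewrite cardsU1 in_setI (negPf hNL) andbF.
have TS : T :\ e \subset S :\ e.
  by apply/setSD/subsetP => x; rewrite !inE => /orP[/eqP -> // | /andP[]].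
apply: le_trans _ (pay_subset (fun x => ltW (p_gt0 x)) TS).
apply: le_trans _ (card_le_pay (sub_in1 (subsetP (subD1set T e)) p_ge1)).
by rewrite ler_nat -ltnS -card_T (cardsD1 e T) -add1n leq_add2r leq_b1.
Qed.

End Payments.

Theorem lemma6 (R : realFieldType) (k : R) (hk : 1 < k)
    (A M : finType) (c : A -> M -> R)
    (hc : forall i e, c i e = 1 \/ c i e = k)
    (X : A -> {set M}) (hX : is_allocation X)
    (p : M -> R) (hp : forall e, 0 < p e)
    (heq : payment_equilibrium k c X p)
    (i : A) (hi : i \in N_H k X p)
    (hef : forall j, j != i -> pEF1 p X i j) :
  forall j, j \in N_L X p -> (#|X i :&: Lset p| <= #|X j|)%N.
Proof.
move=> j; rewrite inE => XjL.
move: hi; rewrite inE card_gt0 => /set0Pn[h]; rewrite !inE => /andP[hXi /eqP ph].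
have ph_gt1 : 1 < p h by rewrite ph.
have hNL : h \notin Lset p by rewrite inE gt_eqF.
have ji : j != i by apply: contraNneq hNL => ji; apply: (subsetP XjL); rewrite ji.
case: (hef j ji) => [Xi0 | [e _ pEF1_e]]; first by rewrite Xi0 inE in hXi.
rewrite -(ler_nat R) -(pay_Lset XjL).
exact: le_trans (card_Lset_le_pay_setD1 e hp hXi ph_gt1) pEF1_e.
Qed.
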